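(* Let $X$ be a finite set with $N=|X|$ and $n=\binom N2$. Let $t,t'$ be two equidistant trees on taxa $X$ with the same coarse type $\{X_i\}_{i\in I}$, and let $\Omega>\omega>0$ be such that $\max\{\eta(t),\eta(t')\}\le\Omega$ and $\min\{\nu(t),\nu(t')\}\ge\omega$. Then \[ d_\Delta(t,t')\le (n+\iota)\,2(\Omega-\omega),\qquad \text{where } \iota=\sum_{i\in I}\binom{|X_i|}{2}. \] If moreover $t$ and $t'$ are both binary trees, then $d_\Delta(t,t')\le (2n-N+1)\,2(\Omega-\omega)$.
   Context: An equidistant tree $t$ on taxa $X$ is identified with the vector $(t_{ab})\in\mathbb{R}^n$ (coordinates indexed by unordered pairs of distinct taxa) of leaf-to-leaf path lengths; such vectors are exactly those for which, for all distinct $a,b,c$, $\max\{t_{ab},t_{ac},t_{bc}\}$ is attained at least twice. Trees are considered up to adding a multiple of $\mathbb{1}$ (changing all pendant edge lengths equally). The depth of a node is its distance from the root. Let $M=\max_{a\ne b}t_{ab}$; the depth of the lowest common ancestor of leaves $a\ne b$ equals $(M-t_{ab})/2$. Define $\eta(t)$ = maximal depth of an internal node $=\frac12(M-\min_{a\neq b}t_{ab})$ and $\nu(t)$ = minimal depth of an internal node other than the root $=\frac12\min\{M-t_{ab}: t_{ab}<M\}$ ($+\infty$ if there is none); both are invariant under adding multiples of $\mathbb{1}$. The coarse type of $t$ is the partition of $X$ into the leaf sets of the subtrees at the children of the root, i.e. distinct $a,b$ are in the same block iff $t_{ab}<M$. The tree is binary if every internal node has exactly two children, i.e. for all distinct $a,b,c$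 the numbers $t_{ab},t_{ac},t_{bc}$ are not all equal. $d_{\Delta}(x,y)=\sum_{i=1}^n (y_i-x_i) + n\max_{i}(x_i-y_i)$. *)

From mathcomp Require Import all_boot all_order all_algebra.
Set Implicit Arguments. Unset Strict Implicit. Unset Printing Implicit Defensive.
Import Order.TTheory GRing.Theory Num.Theory.
Local Open Scope ring_scope.

(* Taxa: a finite type T (X = the whole of T, N = #|T|).
   Coordinates are indexed by unordered pairs {a,b} of distinct taxa,
   represented as 2-element sets; a vector in R^n is a function
   x : {set T} -> R of which only the values on [pairs T] matter. *)

Section Defs.
Variables (R : realFieldType) (T : finType).

Definition pairs : {set {set T}} := [set A : {set T} | #|A| == 2%N].

Definition npairs : nat := 'C(#|T|, 2).

Definition pr (a b : T) : {set T} := [set a; b].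

(* a default coordinate, used only as neutral seed of max/min over the
   (nonempty when N >= 2) set of pairs *)
Definition p0 : {set T} := nth set0 (enum pairs) 0.

Definition vmax (x : {set T} -> R) : R :=
  \big[Num.max/x p0]_(p in pairs) x p.
Definition vmin (x : {set T} -> R) : R :=
  \big[Num.min/x p0]_(p in pairs) x p.

Definition equidistant (t : {set T} -> R) : Prop :=
  forall a b c : T, a != b -> a != c -> b != c ->
    let m := Num.max (t (pr a b)) (Num.max (t (pr a c)) (t (pr b c))) in
    (2 <= (t (pr a b) == m) + (t (pr a c) == m) + (t (pr b c) == m))%N.

Definition Mt (t : {set T} -> R) : R := vmax t.

Definition eta (t : {set T} -> R) : R := (Mt t - vmin t) / 2.

(* nu(t) = (1/2) min { M - t_ab : t_ab < M }, None standing for +infinity *)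
Definition nu (t : {set T} -> R) : option R :=
  match [pick p in pairs | t p < Mt t] with
  | None => None
  | Some q => Some ((\big[Num.min/Mt t - t q]_(p in pairs | t p < Mt t)
                        (Mt t - t p)) / 2)
  end.

Definition ge_opt (w : R) (v : option R) : Prop :=
  match v with None => True | Some v => w <= v end.

Definition coarse_type (t : {set T} -> R) : {set {set T}} :=
  [set [set b | (b == a) || (t (pr a b) < Mt t)] | a : T].

Definition binary (t : {set T} -> R) : Prop :=
  forall a b c : T, a != b -> a != c -> b != c ->
    ~~ ((t (pr a b) == t (pr a c)) && (t (pr a c) == t (pr b c))).

Definition dDelta (x y : {set T} -> R) : R :=
  \sum_(p in pairs) (y p - x p) + npairs%:R * vmax (fun p => x p - y p).

End Defs.

From mathcomp Require Import all_boot all_order all_algebra.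
From mathcomp Require Import zify lra.
Import Order.TTheory GRing.Theory Num.Theory.
Local Open Scope ring_scope.

Set Implicit Arguments. Unset Strict Implicit. Unset Printing Implicit Defensive.

(* [M(t) - t_p] is twice the depth of the lowest common ancestor of the pair p.
   Pairs inside a block of the common coarse type have that ancestor below the
   root in both trees, at depth in [omega, Omega]; for the other pairs it is
   the root.  So [(M(t') - t'_p) - (M(t) - t_p)] is at most [2(Omega - omega)],
   and nonpositive unless p lies inside a block.  With [c := M(t) - M(t')] this
   gives [max_p (t_p - t'_p) <= c + 2(Omega - omega)], while
   [c - (t_p - t'_p)] is at most [2(Omega - omega)] for the pairs inside a block
   and at most 0 for the others.  Writing [d_Delta(t, t')] as the sum over all
   pairs of [max (t - t') - (t_p - t'_p)] bounds it by [(n + K) 2(Omega - omega)],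
   where [K] counts the pairs inside blocks.  Finally [K <= iota], and
   [K <= n - (N - 1)] because, for a pair {x, y} at maximal distance, every
   other taxon is at maximal distance from x or from y. *)

Section Pairs.
Variable T : finType.

Lemma pr_sym (a b : T) : pr a b = pr b a.
Proof. by rewrite /pr setUC. Qed.

Lemma pr_pairs (a b : T) : a != b -> pr a b \in pairs T.
Proof. by move=> ab; rewrite inE /pr cards2 ab. Qed.

Lemma pairsP p : p \in pairs T -> exists a b, a != b /\ p = pr a b.
Proof. by rewrite inE => /cards2P. Qed.

Lemma card_pairs : #|pairs T| = npairs T.
Proof. exact: card_draws. Qed.

Lemma p0_pairs : (2 <= #|T|)%N -> p0 T \in pairs T.
Proof. by move=> N2; rewrite /p0 -mem_enum mem_nth // -cardE card_pairs bin_gt0. Qed.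

End Pairs.

Lemma leq_card_bigcup (I U : finType) (P : pred I) (D : I -> {set U}) :
  (#|\bigcup_(i | P i) D i| <= \sum_(i | P i) #|D i|)%N.
Proof.
apply: (big_ind2 (fun (A : {set U}) n => #|A| <= n)%N) => [|A m B n le_m le_n|//].
  by rewrite cards0.
exact: leq_trans (leq_card_setU A B) (leq_add le_m le_n).
Qed.

Section Extrema.
Variables (R : realFieldType) (T : finType) (x : {set T} -> R).

Lemma le_vmax q : q \in pairs T -> x q <= vmax x.
Proof. exact: le_bigmax_cond. Qed.

Lemma vmin_le q : q \in pairs T -> vmin x <= x q.
Proof. exact: bigmin_le_cond. Qed.

Lemma vmax_le b :
  (2 <= #|T|)%N -> (forall p, p \in pairs T -> x p <= b) -> vmax x <= b.
Proof. by move=> N2 le_b; apply: bigmax_le => //; apply/le_b/p0_pairs. Qed.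

Lemma eq_vmax : (2 <= #|T|)%N -> exists2 p, p \in pairs T & vmax x = x p.
Proof.
move=> N2; apply: (big_ind (fun v => exists2 p, p \in pairs T & v = x p)).
- by exists (p0 T); rewrite ?p0_pairs.
- by move=> _ _ [p pp ->] [q qp ->]; case: leP => _; [exists q | exists p].
- by move=> p pp; exists p.
Qed.

End Extrema.

Section Delta.
Variables (R : realFieldType) (T : finType).

Lemma dDelta_le (x y : {set T} -> R) (S : {set {set T}}) (c L : R) :
  (2 <= #|T|)%N -> S \subset pairs T ->
  (forall p, p \in pairs T -> x p - y p <= c + L) ->
  (forall p, p \in pairs T -> c - (x p - y p) <= (p \in S)%:R * L) ->
  dDelta x y <= (npairs T + #|S|)%:R * L.
Proof.
move=> N2 S_sub up low; set d := fun p => x p - y p.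
have d_le : vmax d <= c + L := vmax_le N2 up.
have -> : dDelta x y = \sum_(p in pairs T) (vmax d - d p).
  rewrite big_split /= sumr_const card_pairs -mulr_natl addrC.
  by congr (_ + _); apply: eq_bigr => p _; rewrite opprB.
apply: (@le_trans _ _ (\sum_(p in pairs T) (L + (p \in S)%:R * L))).
  by apply: ler_sum => p pp; have := low p pp; rewrite /d; lra.
rewrite big_split /= sumr_const card_pairs natrD mulrDl mulr_natl lerD2l.
rewrite (big_setID S) /= (setIidPr S_sub) [X in _ + X]big1 => [|p]; last first.
  by rewrite inE => /andP[/negbTE-> _]; rewrite mul0r.
by rewrite addr0 (eq_bigr (fun=> L)) => [|p ->]; rewrite ?sumr_const ?mulr_natl ?mul1r.
Qed.

End Delta.

Section Trees.
Variables (R : realFieldType) (T : finType).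
Implicit Types (t : {set T} -> R) (a b : T).

Definition block t a : {set T} := [set b | (b == a) || (t (pr a b) < Mt t)].

Definition inner_pairs t : {set {set T}} := [set p in pairs T | t p < Mt t].

Lemma inner_pairs_sub t : inner_pairs t \subset pairs T.
Proof. by apply/subsetP => p; rewrite inE => /andP[]. Qed.

Lemma equidistant_le_max t a b c : equidistant t -> a != b -> a != c -> b != c ->
  t (pr a b) <= Num.max (t (pr a c)) (t (pr b c)).
Proof.
move=> eqt ab ac bc; move: (eqt a b c ab ac bc) => /=.
rewrite leNgt; apply: contraL; rewrite gt_max => /andP[lt_ac lt_bc].
have -> : Num.max (t (pr a b)) (Num.max (t (pr a c)) (t (pr b c))) = t (pr a b).
  by apply/max_idPl; rewrite ge_max !ltW.
by rewrite eqxx (lt_eqF lt_ac) (lt_eqF lt_bc).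
Qed.

Lemma block_lt t a b c : equidistant t -> a != b ->
  a \in block t c -> b \in block t c -> t (pr a b) < Mt t.
Proof.
move=> eqt ab; rewrite !inE.
have [<- _ | ac] := eqVneq a c.
  by case/orP=> [/eqP ba | //]; rewrite ba eqxx in ab.
have [<- | bc /= lt_ac lt_bc] := eqVneq b c; first by rewrite pr_sym.
apply: le_lt_trans (equidistant_le_max eqt ab ac bc) _.
by rewrite gt_max !(pr_sym _ c) lt_ac lt_bc.
Qed.

Lemma inner_pairs_coarse_type t t' : equidistant t ->
  coarse_type t = coarse_type t' -> inner_pairs t' \subset inner_pairs t.
Proof.
move=> eqt ct; apply/subsetP => _ /setIdP[/[dup]/pairsP[a [b [ab ->]]] pp lt'].
apply/setIdP; split=> //.
have : block t' a \in coarse_type t by rewrite ct; apply: imset_f.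
case/imsetP => c _ block_a; apply: (block_lt eqt ab (c := c)); rewrite /block -block_a.
  by rewrite inE eqxx.
by rewrite inE lt' orbT.
Qed.

Lemma Mt_sub_le_eta t p : p \in pairs T -> Mt t - t p <= 2 * eta t.
Proof. by move=> pp; rewrite /eta mulrC divfK ?pnatr_eq0 // lerD2l lerN2 vmin_le. Qed.

Lemma nu_le_Mt_sub t omega p : ge_opt omega (nu t) ->
  p \in pairs T -> t p < Mt t -> 2 * omega <= Mt t - t p.
Proof.
rewrite /nu; case: pickP => [q _ | none]; last first.
  by move=> _ pp lt; move: (none p); rewrite pp lt.
rewrite /= ler_pdivlMr ?ltr0n // mulrC => le_min pp lt.
by apply: le_trans le_min (bigmin_le_cond _ _ _); rewrite pp.
Qed.

Lemma lca_depth_gap_le t t' Omega omega q :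
  equidistant t -> coarse_type t = coarse_type t' ->
  eta t' <= Omega -> ge_opt omega (nu t) -> q \in pairs T ->
  (Mt t' - t' q) - (Mt t - t q) <= (q \in inner_pairs t')%:R * (2 * (Omega - omega)).
Proof.
move=> eqt ct eta_le nu_ge qp.
have tq_le : t q <= Mt t := le_vmax t qp.
have [/(subsetP (inner_pairs_coarse_type eqt ct))/setIdP[_ lt] | /setIdP out] :=
  boolP (q \in inner_pairs t').
  have := Mt_sub_le_eta t' qp; have := nu_le_Mt_sub nu_ge qp lt; rewrite mul1r; lra.
have : Mt t' <= t' q by rewrite leNgt; apply/negP => lt; apply: out.
rewrite mul0r; lra.
Qed.

Lemma dDelta_le_inner_pairs t t' Omega omega : (2 <= #|T|)%N ->
  equidistant t -> equidistant t' -> coarse_type t = coarse_type t' ->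
  omega < Omega -> eta t <= Omega -> eta t' <= Omega ->
  ge_opt omega (nu t) -> ge_opt omega (nu t') ->
  dDelta t t' <= (npairs T + #|inner_pairs t|)%:R * (2 * (Omega - omega)).
Proof.
move=> N2 eqt eqt' ct lt_omega eta_le eta_le' nu_ge nu_ge'.
apply: (dDelta_le (c := Mt t - Mt t')) N2 (inner_pairs_sub t) _ _ => p pp.
  have := lca_depth_gap_le eqt ct eta_le' nu_ge pp.
  by case: (p \in _); rewrite ?mul1r ?mul0r; lra.
have := lca_depth_gap_le eqt' (esym ct) eta_le nu_ge' pp; lra.
Qed.

End Trees.

Section Counting.
Variables (R : realFieldType) (T : finType) (t : {set T} -> R).

Lemma card_inner_pairs_le_iota :
  (#|inner_pairs t| <= \sum_(B in coarse_type t) 'C(#|B|, 2))%N.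
Proof.
under eq_bigr => B _ do rewrite -cards_draws.
apply: leq_trans (leq_card_bigcup _ _); apply/subset_leq_card/subsetP.
move=> _ /setIdP[/[dup]/pairsP[a [b [ab ->]]] pp lt].
apply/bigcupP; exists (block t a); first exact: imset_f.
rewrite inE; apply/andP; split; last by rewrite inE in pp.
by apply/subsetP => z /set2P[]->; rewrite inE ?eqxx ?lt ?orbT.
Qed.

Lemma card_inner_pairs_add_le : equidistant t -> (2 <= #|T|)%N ->
  (#|inner_pairs t| + #|T| <= npairs T + 1)%N.
Proof.
move=> eqt N2; have [_ /pairsP[x [y [xy ->]]] max_xy] := eq_vmax t N2.
set outer := pairs T :\: inner_pairs t.
have split_pairs : (#|inner_pairs t| + #|outer| = npairs T)%N.
  by rewrite -card_pairs -(cardsID (inner_pairs t) (pairs T)) (setIidPr (inner_pairs_sub t)).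
have outer_max p : p \in pairs T -> Mt t <= t p -> p \in outer.
  by move=> pp le_p; apply/setDP; split=> //; apply/negP => /setIdP[_]; rewrite ltNge le_p.
pose f z := if t (pr x z) < Mt t then pr y z else pr x z.
have f_outer z : z != x -> f z \in outer.
  rewrite eq_sym /f => zx; case: ifP => [lt_xz | /negbT]; last first.
    by rewrite -leNgt; apply: outer_max; rewrite pr_pairs.
  have yz : y != z by apply: contraTneq lt_xz => <-; rewrite -max_xy ltxx.
  apply: outer_max; first by rewrite pr_pairs.
  have := equidistant_le_max eqt xy zx yz.
  by rewrite -max_xy -/(Mt t) le_max leNgt lt_xz.
have mem_f z : z \in f z by rewrite /f; case: ifP => _; rewrite set22.
have in_f z w : w \in f z -> w != x -> w != z -> w = y.
  by rewrite /f; case: ifP => _ /set2P[]-> //; rewrite eqxx.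
have f_inj : {in [set~ x] &, injective f}.
  move=> z1 z2; rewrite !in_setC1 => z1x z2x f12; have [//|z12] := eqVneq z1 z2.
  have z1f : z1 \in f z2 by rewrite -f12 mem_f.
  have z2f : z2 \in f z1 by rewrite f12 mem_f.
  have z1y := in_f _ _ z1f z1x z12.
  have z2y := in_f _ _ z2f z2x (contra_neq esym z12).
  by rewrite z1y z2y eqxx in z12.
have : (#|[set~ x]| <= #|outer|)%N.
  rewrite -(card_in_imset f_inj); apply/subset_leq_card/subsetP => _ /imsetP[z zx ->].
  by apply: f_outer; rewrite in_setC1 in zx.
rewrite cardsC1; lia.
Qed.

End Counting.

Theorem mainTheorem5 (R : realFieldType) (T : finType)
  (t t' : {set T} -> R) (Omega omega : R) :
  (2 <= #|T|)%N ->
  equidistant t -> equidistant t' ->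
  coarse_type t = coarse_type t' ->
  0 < omega -> omega < Omega ->
  Num.max (eta t) (eta t') <= Omega ->
  ge_opt omega (nu t) -> ge_opt omega (nu t') ->
  dDelta t t' <= (npairs T + \sum_(B in coarse_type t) 'C(#|B|, 2))%:R
                   * (2 * (Omega - omega))
  /\ (binary t -> binary t' ->
      dDelta t t' <= (2 * (npairs T)%:R - (#|T|)%:R + 1) * (2 * (Omega - omega))).
Proof.
move=> N2 eqt eqt' ct _ lt_omega; rewrite ge_max => /andP[eta_le eta_le'] nu_ge nu_ge'.
have L_ge0 : 0 <= 2 * (Omega - omega) by rewrite mulr_ge0 // subr_ge0 ltW.
have dD := dDelta_le_inner_pairs N2 eqt eqt' ct lt_omega eta_le eta_le' nu_ge nu_ge'.
split=> [|_ _]; apply: (le_trans dD); apply: ler_wpM2r => //.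
  by rewrite ler_nat leq_add2l card_inner_pairs_le_iota.
have : ((#|inner_pairs t| + #|T|)%:R <= (npairs T + 1)%:R :> R).
  by rewrite ler_nat card_inner_pairs_add_le.
rewrite !natrD; lra.
Qed.
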